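(* Every $\epsilon_5$-segment bipath $P$ from $u$ to $v$ in $G$ is an $\epsilon_5$-bipath.
   Context: $G=(V,E)$ is an undirected graph with $n\ge3$ vertices and real edge weights in $[1,W]$; shortest paths in every subgraph are assumed unique, $\pi_{G'}(x,y)$ is the shortest $x$-$y$ path in $G'$, $\circ$ is path concatenation, $|P|$ weighted length, $P[a,b]$ subpath. Let $k=\ln n$, $\epsilon>0$, $\epsilon_1=\epsilon/(2+\epsilon)$, $\epsilon_5=\epsilon_1/(4k-2)$. Let $V=U_1,\dots,U_p$ be subsets of $V$; the level $l(v)$ is the largest $l$ with $v\in U_l$, and $G_i$ is the subgraph induced by vertices of level $\le i$. $\epsilon_5$-segments: for $P=(u=v_0,\dots,v_\ell=v)$ and $1\le i,j<\ell$, $v_i,v_j$ are in the same segment if either both $|P[u,v_i]|,|P[u,v_j]|\le|P|/2$ and $\lfloor\log_{1+\epsilon_5}|P[u,v_i]|\rfloor=\lfloor\log_{1+\epsilon_5}|P[u,v_j]|\rfloor$, or both $|P[v_i,v]|,|P[v_j,v]|<|P|/2$ and $\lfloor\log_{1+\epsilon_5}|P[v_i,v]|\rfloor=\lfloor\log_{1+\epsilon_5}|P[v_j,v]|\rfloor$; classes are contiguous, $u,v$ in no segment. $P$ is an $\epsilon_5$-segment bipath if every segment $P[x,y]$ equals $\pi_{G_i}(x,z)\circ\pi_{G_j}(z,y)$ for some levels $1\le i,j\le p$ and some $z\in P[x,y]$. Let $B=\lceil\log_{1+\epsilon_5}(nW)\rceil$. $P$ is an $\epsilon_5$-bipath if it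 is a concatenation $e_0,P_0,e_1,\dots,P_{2B+1},e_{2B+2}$ with each $e_i$ empty or an edge, each $P_k=P[u_k,v_k]$ either empty or of the form $\pi_{G_i}(u_k,z)\circ\pi_{G_j}(z,v_k)$ for some $z\in P_k$ and levels $1\le i,j\le p$, and $|P[u,v_k]|\le(1+\epsilon_5)^k$ if $k<B+1$, $|P[u_k,v]|\le(1+\epsilon_5)^{2B+1-k}$ if $k\ge B+1$ (for nonempty $P_k$). *)

From mathcomp Require Import all_boot all_order all_algebra.
From mathcomp Require Import reals exp.
Set Implicit Arguments. Unset Strict Implicit. Unset Printing Implicit Defensive.
Import Order.TTheory GRing.Theory Num.Theory.
Local Open Scope ring_scope.

Section Defs.
Variables (R : realType) (V : finType) (adj : rel V) (w : V -> V -> R).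

Definition wlen (p : seq V) : R := \sum_(e <- zip p (behead p)) w e.1 e.2.

Definition walk_in (S : {set V}) (p : seq V) (x y : V) : Prop :=
  exists s, [/\ p = x :: s, last x s = y, path adj x s & all (mem S) p].

Definition is_spath (S : {set V}) (p : seq V) (x y : V) : Prop :=
  walk_in S p x y /\ forall q, walk_in S q x y -> wlen p <= wlen q.

Definition subpath (P : seq V) (a b : nat) : seq V := take (b - a).+1 (drop a P).

Variables (U : nat -> {set V}) (p : nat).

Definition level (x : V) : nat := \max_(l < p.+1 | (1 <= l)%N && (x \in U l)) l.

Definition Gset (i : nat) : {set V} := [set x | (level x <= i)%N].

Definition two_spaths (P : seq V) (x0 : V) (a b : nat) : Prop :=
  exists m i j, [/\ (a <= m <= b)%N, (1 <= i <= p)%N, (1 <= j <= p)%N,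
    is_spath (Gset i) (subpath P a m) (nth x0 P a) (nth x0 P m)
  & is_spath (Gset j) (subpath P m b) (nth x0 P m) (nth x0 P b)].

Variables (eps5 : R) (B : nat).

Definition flog (x : R) : int := Num.floor (ln x / ln (1 + eps5)).

(* P = (v_0, ..., v_l) with l = (size P).-1; prefix/suffix lengths *)
Definition pl (P : seq V) (i : nat) : R := wlen (take i.+1 P).
Definition sl (P : seq V) (i : nat) : R := wlen (drop i P).

Definition same_seg (P : seq V) (i j : nat) : Prop :=
  let l := (size P).-1 in
  [/\ (1 <= i < l)%N, (1 <= j < l)%N &
    (pl P i <= wlen P / 2 /\ pl P j <= wlen P / 2 /\ flog (pl P i) = flog (pl P j))
    \/ (sl P i < wlen P / 2 /\ sl P j < wlen P / 2 /\ flog (sl P i) = flog (sl P j))].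

(* every eps5-segment P[v_a, v_b] (a = min, b = max index of its class) is a
   concatenation of two shortest paths in some G_i, G_j *)
Definition segment_bipath (P : seq V) (x0 : V) : Prop :=
  forall a b, same_seg P a b -> (forall c, same_seg P a c -> (a <= c <= b)%N) ->
    two_spaths P x0 a b.

(* eps5-bipath: P = e_0, P_0, e_1, ..., P_{2B+1}, e_{2B+2}; P_k = P[v_(s k), v_(t k)],
   gaps of 0 or 1 edge between consecutive pieces; pieces with no edge are the
   empty pieces. *)
Definition bipath (P : seq V) (x0 : V) : Prop :=
  let l := (size P).-1 in
  exists s t : nat -> nat,
  [/\ (s 0 <= 1)%N, (l <= (t (2 * B + 1)%N).+1)%N,
      forall k, (k <= 2 * B + 1)%N -> (s k <= t k <= l)%N,
      forall k, (k < 2 * B + 1)%N -> (t k <= s k.+1 <= (t k).+1)%N &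
      forall k, (k <= 2 * B + 1)%N -> (s k < t k)%N ->
        [/\ two_spaths P x0 (s k) (t k),
            (k < B.+1)%N -> pl P (t k) <= (1 + eps5) ^+ k
          & (B.+1 <= k)%N -> sl P (s k) <= (1 + eps5) ^+ (2 * B + 1 - k)]].

End Defs.

Definition eps1 (R : realType) (eps : R) : R := eps / (2 + eps).
Definition eps5 (R : realType) (n : nat) (eps : R) : R :=
  eps1 eps / (4 * ln (n%:R : R) - 2).
Definition Bnum (R : realType) (n : nat) (W eps : R) : nat :=
  `| Num.ceil (ln (n%:R * W) / ln (1 + eps5 n eps)) |%N.

(* Number the eps5-segments along P.  An interior vertex v_i with
   |P[u,v_i]| <= |P|/2 gets the key floor(log_(1+eps5) |P[u,v_i]|) + 1, which
   lies in [1, B]; any other interior vertex gets 2B - floor(log_(1+eps5)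
   |P[v_i,v]|), which lies in [B+1, 2B].  B is large enough because
   |P| < nW <= (1+eps5)^B.  Two interior vertices lie in the same segment iff
   their keys agree, and keys are nondecreasing along P.  So the vertices of
   key k form a contiguous block P_k = P[v_(c k + 1), v_(c (k+1))], where c k
   is the last interior index of key < k.  Consecutive blocks are at most one
   edge apart.  A block with at least two vertices is a whole segment, hence
   a concatenation of two shortest paths, and the length bounds required of
   P_k are the upper ends of the logarithmic buckets. *)

From mathcomp Require Import all_boot all_order all_algebra.
From mathcomp Require Import reals exp.
From mathcomp Require Import zify lra.
Import Order.TTheory GRing.Theory Num.Theory.
Local Open Scope ring_scope.
Set Implicit Arguments. Unset Strict Implicit. Unset Printing Implicit Defensive.

Definition logb (R : realType) (e x : R) : R := ln x / ln (1 + e).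
Definition ilog (R : realType) (e x : R) : nat := Num.truncn (logb e x).

Section LogBase.
Variables (R : realType) (e : R).
Hypothesis e_gt0 : 0 < e.

Lemma ln1D_gt0 : 0 < ln (1 + e).
Proof. by apply: ln_gt0; rewrite ltrDl. Qed.

Lemma logb_expr k : logb e ((1 + e) ^+ k) = k%:R.
Proof.
rewrite /logb lnXn ?ltr_wpDr ?ltW // -[ln _ *+ k]mulr_natr mulrAC divff ?mul1r //.
exact: lt0r_neq0 ln1D_gt0.
Qed.

Let pos_ge1 (x : R) : 1 <= x -> x \in Num.pos.
Proof. by rewrite posrE; apply: lt_le_trans. Qed.

Let pos_expr k : (1 + e) ^+ k \in Num.pos.
Proof. by rewrite posrE exprn_gt0 // ltr_wpDr ?ltW. Qed.

Lemma ler_logb : {in Num.pos &, {mono logb e : x y / x <= y}}.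
Proof. by move=> x y hx hy; rewrite /logb ler_pM2r ?invr_gt0 ?ln1D_gt0 ?ler_ln. Qed.

Lemma ltr_logb : {in Num.pos &, {mono logb e : x y / x < y}}.
Proof. by move=> x y hx hy; rewrite /logb ltr_pM2r ?invr_gt0 ?ln1D_gt0 ?ltr_ln. Qed.

Lemma logb_ge0 x : 1 <= x -> 0 <= logb e x.
Proof. by move=> hx; apply: divr_ge0; [exact: ln_ge0 | exact: ltW ln1D_gt0]. Qed.

Lemma flog_ilog x : 1 <= x -> flog e x = (ilog e x)%:Z.
Proof.
move=> hx; rewrite /ilog truncn_floor logb_ge0 //.
by rewrite gez0_abs ?floor_ge0 ?logb_ge0.
Qed.

Lemma ilog_le x y : 1 <= x -> x <= y -> (ilog e x <= ilog e y)%N.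
Proof.
move=> hx hxy; apply: le_truncn.
by rewrite ler_logb ?pos_ge1 ?(le_trans hx).
Qed.

Lemma lt_expr_ilogS x : 1 <= x -> x < (1 + e) ^+ (ilog e x).+1.
Proof. by move=> hx; rewrite -ltr_logb ?pos_expr ?pos_ge1 // logb_expr truncnS_gt. Qed.

Lemma ilog_lt x k : 1 <= x -> x < (1 + e) ^+ k -> (ilog e x < k)%N.
Proof.
move=> hx; rewrite -ltr_logb ?pos_expr ?pos_ge1 // logb_expr.
by rewrite /ilog truncn_lt_nat ?logb_ge0.
Qed.

Lemma le_expr_ceil_logb N : 1 <= N -> N <= (1 + e) ^+ `|Num.ceil (logb e N)|%N.
Proof.
move=> hN; rewrite -ler_logb ?pos_expr ?pos_ge1 // logb_expr natr_absz.
rewrite ger0_norm ?ceil_ge //.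
by rewrite ceil_ge0 (lt_le_trans (ltrN10 R)) ?logb_ge0.
Qed.
End LogBase.

Section WalkLength.
Variables (R : realType) (V : finType) (adj : rel V) (w : V -> V -> R).

Lemma wlen_nil : wlen w [::] = 0.
Proof. by rewrite /wlen big_nil. Qed.

Lemma wlen_seq1 x : wlen w [:: x] = 0.
Proof. by rewrite /wlen big_nil. Qed.

Lemma wlen_cons2 x y s : wlen w [:: x, y & s] = w x y + wlen w (y :: s).
Proof. by rewrite /wlen big_cons. Qed.

Lemma wlen_take_drop s i : wlen w (take i.+1 s) + wlen w (drop i s) = wlen w s.
Proof.
elim: s i => [|x [|y s] IH] [|i] //=; rewrite ?wlen_nil ?wlen_seq1 ?addr0 ?add0r //.
by rewrite !wlen_cons2 -addrA (IH i).
Qed.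

Lemma wlen_ge (a : R) s : (forall x y, adj x y -> a <= w x y) ->
  sorted adj s -> (size s).-1%:R * a <= wlen w s.
Proof.
move=> w_ge; elim: s => [|x [|y s] IH]; rewrite ?wlen_nil ?wlen_seq1 ?mul0r //.
case/andP=> xy ys; rewrite wlen_cons2 /= mulrSr mulrDl mul1r addrC.
by rewrite lerD ?w_ge ?IH.
Qed.

Lemma wlen_le (b : R) s : (forall x y, adj x y -> w x y <= b) ->
  sorted adj s -> wlen w s <= (size s).-1%:R * b.
Proof.
move=> w_le; elim: s => [|x [|y s] IH]; rewrite ?wlen_nil ?wlen_seq1 ?mul0r //.
case/andP=> xy ys; rewrite wlen_cons2 /= mulrSr mulrDl mul1r addrC.
by rewrite lerD ?w_le ?IH.
Qed.
End WalkLength.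

Section Cuts.
Variables (l : nat) (key : nat -> nat).
Hypothesis key_mono :
  forall i j, (1 <= i)%N -> (i <= j)%N -> (j < l)%N -> (key i <= key j)%N.

Definition cut k : nat := (\max_(j < l | (1 <= j) && (key j < k)) j)%N.

Lemma cut_le_pred k : (cut k <= l.-1)%N.
Proof. by apply/bigmax_leqP => j _; move: (ltn_ord j); lia. Qed.

Lemma cut0 : cut 0 = 0%N.
Proof. by apply/eqP; rewrite -leqn0; apply/bigmax_leqP => j /andP[]. Qed.

Lemma cut_leS k : (cut k <= cut k.+1)%N.
Proof.
apply/bigmax_leqP => j /andP[j_ge1 jk]; apply: leq_bigmax_cond.
by rewrite j_ge1 ltnW.
Qed.

Lemma leq_cut k i : (1 <= i < l)%N -> (i <= cut k)%N = (key i < k)%N.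
Proof.
case/andP=> i_ge1 il; apply/idP/idP => [i_le | ik]; last first.
  by apply: (leq_bigmax_cond (Ordinal il)); rewrite i_ge1.
rewrite ltnNge; apply/negP => ki.
suff : (cut k <= i.-1)%N by lia.
apply/bigmax_leqP => j /andP[_ jk]; rewrite -ltnS prednK // ltnNge.
apply/negP => ij; have := key_mono i_ge1 ij (ltn_ord j); lia.
Qed.

Lemma key_eq_cut k i : (1 <= i < l)%N -> (key i == k) = (cut k < i <= cut k.+1)%N.
Proof.
by move=> hi; rewrite ltnNge !leq_cut // -leqNgt ltnS eqn_leq andbC.
Qed.
End Cuts.

Section SegmentKey.
Variables (R : realType) (V : finType) (adj : rel V) (w : V -> V -> R).
Variables (P : seq V) (e : R) (B : nat).
Hypothesis w_ge1 : forall x y, adj x y -> 1 <= w x y.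
Hypothesis P_sorted : sorted adj P.
Hypothesis e_gt0 : 0 < e.
Hypothesis wlen_lt_expr : wlen w P < (1 + e) ^+ B.

Local Notation L := (wlen w P).
Local Notation interior i := (1 <= i < (size P).-1)%N.

Lemma pl_add_sl i : pl w P i + sl w P i = L.
Proof. exact: wlen_take_drop. Qed.

Lemma pl_ge1 i : interior i -> 1 <= pl w P i.
Proof.
move=> hi; apply: le_trans (wlen_ge w_ge1 (take_sorted _ P_sorted)).
by rewrite mulr1 size_take; case: ifP => _; rewrite ler1n; lia.
Qed.

Lemma sl_ge1 i : interior i -> 1 <= sl w P i.
Proof.
move=> hi; apply: le_trans (wlen_ge w_ge1 (drop_sorted _ P_sorted)).
by rewrite mulr1 size_drop ler1n; lia.
Qed.

Lemma pl_le i j : (i <= j)%N -> pl w P i <= pl w P j.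
Proof.
move=> ij; rewrite /pl -(wlen_take_drop w (take j.+1 P) i) take_takel // lerDl.
apply: le_trans (wlen_ge w_ge1 (drop_sorted _ (take_sorted _ P_sorted))).
by rewrite mulr1.
Qed.

Lemma ilog_pl_lt i : interior i -> (ilog e (pl w P i) < B)%N.
Proof.
move=> hi; apply: ilog_lt (pl_ge1 hi) (le_lt_trans _ wlen_lt_expr) => //.
by have := pl_add_sl i; have := sl_ge1 hi; lra.
Qed.

Lemma ilog_sl_lt i : interior i -> (ilog e (sl w P i) < B)%N.
Proof.
move=> hi; apply: ilog_lt (sl_ge1 hi) (le_lt_trans _ wlen_lt_expr) => //.
by have := pl_add_sl i; have := pl_ge1 hi; lra.
Qed.

Definition seg_key i : nat :=
  if pl w P i <= L / 2 then (ilog e (pl w P i)).+1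
  else (2 * B - ilog e (sl w P i))%N.

Lemma seg_key_leB i : interior i -> (seg_key i <= B)%N = (pl w P i <= L / 2).
Proof.
move=> hi; rewrite /seg_key; have := ilog_pl_lt hi; have := ilog_sl_lt hi.
by case: ifP => _; lia.
Qed.

Lemma seg_key_range i : interior i -> (0 < seg_key i <= 2 * B)%N.
Proof.
move=> hi; rewrite /seg_key; have := ilog_pl_lt hi; have := ilog_sl_lt hi.
by case: ifP => _; lia.
Qed.

Lemma seg_key_mono i j : (1 <= i)%N -> (i <= j)%N -> (j < (size P).-1)%N ->
  (seg_key i <= seg_key j)%N.
Proof.
move=> i_ge1 ij jl; have hi : interior i by lia.
have hj : interior j by lia.
have pl_ij := pl_le ij.
have sl_ji : sl w P j <= sl w P i by have := pl_add_sl i; have := pl_add_sl j; lra.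
rewrite /seg_key; have := ilog_pl_lt hi; have := ilog_sl_lt hj.
case: ifP => hhi; case: ifP => hhj.
- by rewrite ltnS ilog_le // pl_ge1.
- lia.
- by move: hhi; rewrite (le_trans pl_ij hhj).
- by move=> _ _; apply: leq_sub2l; rewrite ilog_le // sl_ge1.
Qed.

Lemma sl_lt_half i : (sl w P i < L / 2) = ~~ (pl w P i <= L / 2).
Proof. by rewrite -ltNge; have := pl_add_sl i => sum_i; apply/idP/idP => ?; lra. Qed.

Lemma same_seg_key i j :
  same_seg w e P i j <-> [/\ interior i, interior j & seg_key i = seg_key j].
Proof.
rewrite /same_seg; have ilog_eq k m : 1 <= k -> 1 <= m ->
    (flog e k = flog e m) <-> (ilog e k = ilog e m).
  by move=> k1 m1; rewrite !flog_ilog //; split=> [[]|->].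
split=> [[hi hj [[pi [pj eq_ij]] | [si [sj eq_ij]]]] | ].
- by split=> //; rewrite /seg_key pi pj (ilog_eq _ _ (pl_ge1 hi) (pl_ge1 hj)).1.
- split=> //; move: si sj; rewrite !sl_lt_half /seg_key => /negbTE -> /negbTE ->.
  by rewrite (ilog_eq _ _ (sl_ge1 hi) (sl_ge1 hj)).1.
case=> hi hj hk; have half_eq : (pl w P i <= L / 2) = (pl w P j <= L / 2).
  by rewrite -!seg_key_leB // hk.
split=> //; move: hk; rewrite /seg_key half_eq !sl_lt_half half_eq.
case: ifP => half_j.
  case=> eq_ij; left; do 2!split=> //.
  by rewrite (ilog_eq _ _ (pl_ge1 hi) (pl_ge1 hj)).
move=> eq_ij; right; do 2!split=> //.
rewrite (ilog_eq _ _ (sl_ge1 hi) (sl_ge1 hj)).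
by have := ilog_sl_lt hi; have := ilog_sl_lt hj; lia.
Qed.

Lemma pl_lt_seg_key i : interior i -> (seg_key i <= B)%N ->
  pl w P i < (1 + e) ^+ seg_key i.
Proof.
move=> hi; rewrite seg_key_leB // /seg_key => ->.
exact: lt_expr_ilogS (pl_ge1 hi).
Qed.

Lemma sl_lt_seg_key i : interior i -> (B < seg_key i)%N ->
  sl w P i < (1 + e) ^+ (2 * B + 1 - seg_key i).
Proof.
move=> hi; rewrite ltnNge seg_key_leB // /seg_key => /negbTE ->.
have := ilog_sl_lt hi; set f := ilog e (sl w P i) => f_lt_B.
have -> : (2 * B + 1 - (2 * B - f) = f.+1)%N by lia.
exact: lt_expr_ilogS (sl_ge1 hi).
Qed.

Lemma segment_bipath_bipath (U : nat -> {set V}) (p : nat) (x0 : V) :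
  segment_bipath adj w U p e P x0 -> bipath adj w U p e B P x0.
Proof.
move=> seg_two_spaths; set l := (size P).-1.
pose c := cut l seg_key.
have c_le k : (c k <= l.-1)%N := cut_le_pred l seg_key k.
have c_leS k : (c k <= c k.+1)%N := cut_leS l seg_key k.
have key_eq k i : interior i -> (seg_key i == k) = (c k < i <= c k.+1)%N.
  exact: (key_eq_cut seg_key_mono).
exists (fun k => minn (c k).+1 (c k.+1)), (fun k => c k.+1); split.
- by rewrite /c cut0 geq_minl.
- case: (ltnP 1 l) => [l_gt1 | ]; last by lia.
  have last_interior : interior l.-1 by lia.
  suff : (l.-1 <= c (2 * B + 1).+1)%N by lia.
  by rewrite (leq_cut seg_key_mono) //; have := seg_key_range last_interior; lia.
- by move=> k _; have := c_le k.+1; lia.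
- by move=> k _; have := c_leS k.+1; lia.
move=> k _ st_k; set a := (c k).+1; set b := c k.+1.
have ab : (a < b)%N by lia.
have ha : interior a by have := c_le k.+1; lia.
have hb : interior b by have := c_le k.+1; lia.
have key_a : seg_key a = k by apply/eqP; rewrite key_eq //; lia.
have key_b : seg_key b = k by apply/eqP; rewrite key_eq //; lia.
have -> : minn a b = a by lia.
split.
- apply: seg_two_spaths; first by apply/same_seg_key; rewrite key_a key_b.
  move=> i /same_seg_key[_ hi key_i].
  by move: (key_eq k i hi); rewrite -key_i key_a eqxx; lia.
- by move=> k_le; rewrite -key_b ltW // pl_lt_seg_key // key_b.
- by move=> k_gt; rewrite -key_a ltW // sl_lt_seg_key // key_a.
Qed.
End SegmentKey.

Lemma le_1BV_ln (R : realType) (x : R) : 0 < x -> 1 - x^-1 <= ln x.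
Proof.
move=> x_gt0; have xV_gt0 : 0 < x^-1 by rewrite invr_gt0.
have : -1 < x^-1 - 1 by lra.
by move/le_ln1Dx; rewrite addrCA subrr addr0 lnV ?posrE //; lra.
Qed.

Lemma eps5_gt0 (R : realType) (n : nat) (eps : R) :
  (3 <= n)%N -> 0 < eps -> 0 < eps5 n eps.
Proof.
move=> n_ge3 eps_gt0; rewrite /eps5 /eps1.
have n_gt0 : (0 : R) < n%:R by rewrite ltr0n; lia.
have nV_le : n%:R^-1 <= (3%:R : R)^-1.
  by rewrite lef_pV2 ?posrE ?ler_nat ?ltr0n //; lia.
have ln_n := le_1BV_ln n_gt0.
by rewrite !divr_gt0 //; lra.
Qed.

Unset Implicit Arguments.
Theorem lemma4p11 (R : realType) (V : finType) (adj : rel V) (w : V -> V -> R)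
  (W eps : R) (U : nat -> {set V}) (p : nat) (P : seq V) (u v : V) :
  (3 <= #|V|)%N ->
  symmetric adj -> irreflexive adj ->
  (forall x y, adj x y -> w x y = w y x) ->
  (forall x y, adj x y -> 1 <= w x y <= W) ->
  0 < eps ->
  (1 <= p)%N -> U 1%N = [set: V] ->
  (* shortest paths in every (induced) subgraph are unique *)
  (forall (S : {set V}) x y q1 q2,
     is_spath adj w S q1 x y -> is_spath adj w S q2 x y -> q1 = q2) ->
  (* P is a path from u to v in G *)
  walk_in adj [set: V] P u v -> uniq P ->
  segment_bipath adj w U p (eps5 #|V| eps) P u ->
  bipath adj w U p (eps5 #|V| eps) (Bnum #|V| W eps) P u.
Proof.
move=> V_ge3 _ _ _ w_bnd eps_gt0 _ _ _ [s [-> _ path_s _]] uniq_P.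
have e_gt0 := eps5_gt0 V_ge3 eps_gt0.
have w_ge1 x y : adj x y -> 1 <= w x y by case/w_bnd/andP.
have w_leW x y : adj x y -> w x y <= W by case/w_bnd/andP.
apply: segment_bipath_bipath => //.
case: s path_s uniq_P => [|y s] path_s uniq_P.
  by rewrite wlen_seq1 exprn_gt0 // ltr_wpDr ?ltW.
have /andP[uy _] := path_s.
have W_ge1 : 1 <= W := le_trans (w_ge1 _ _ uy) (w_leW _ _ uy).
have size_lt : (size (y :: s) < #|V|)%N.
  by have := max_card (mem (u :: y :: s)); rewrite (card_uniqP uniq_P).
apply: le_lt_trans (wlen_le (s := u :: y :: s) w_leW path_s) _.
apply: lt_le_trans (le_expr_ceil_logb e_gt0 _); last first.
  by apply: mulr_ege1 => //; rewrite ler1n; lia.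
by rewrite ltr_pM2r ?ltr_nat // (lt_le_trans ltr01).
Qed.
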